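(* Let $H$ be a Hintikka formula of $\mathbf{L_1}$, let $C_1\neq C_2$ be chains of $H$, and let $b$ be a tail of $C_1$. Then $b\notin C_2$.
   Context: Formulas of $\mathbf{L_1}$: built from atomic formulas $\epsilon ab$ ($a,b$ name variables, possibly equal) with primitive connectives $\vee,\sim$. Positive/negative parts (occurrences): $A$ is a positive part of $A$; if $B\vee C$ is a positive part then $B,C$ are positive parts; if $\sim B$ is a positive part then $B$ is a negative part; if $\sim B$ is a negative part then $B$ is a positive part. $F[B_+,B_-]$ denotes a formula in which some formula $B$ has one occurrence as positive part and another non-overlapping occurrence as negative part. Hintikka formula: a formula $H$ such that (1) $H$ is not of the form $F[B_+,B_-]$; (2) if $B\vee C$ is a negative part of $H$ then $B$ or $C$ is; (3) if $\epsilon ab$ is a negative part then so is $\epsilon aa$; (4) if $\epsilon ab,\epsilon bc$ are negative parts then so is $\epsilon ac$; (5) if $\epsilon ab,\epsilon bb$ are negative parts then so is $\epsilon ba$. Chain of a Hintikka formula $H$: a nonempty finite set $C$ of name variables such that for all $a_i,a_j\in C$ (including $a_i=a_j$) both $\epsilon a_ia_j$ and $\epsilon a_ja_i$ occur as negative parts of $H$, and $C$ is maximal with this property. Tail of a chain $C$: a name variable $b\notin C$ such that $\epsilon ab$ is a negative part of $H$ for some $a\in C$. *)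

From HB Require Import structures.
From mathcomp Require Import all_boot.
From mathcomp Require Import finmap.
Set Implicit Arguments. Unset Strict Implicit. Unset Printing Implicit Defensive.
Local Open Scope fset_scope.

Definition name := nat.

Inductive formula : Type :=
| Eps : name -> name -> formula
| Or  : formula -> formula -> formula
| Neg : formula -> formula.

(* Occurrences of parts.  [part A p s B] : B occurs in A at position p
   (a path of child indices; 0 = left/only child, 1 = right child) as a
   positive part (s = true) or as a negative part (s = false). *)
Inductive part (A : formula) : seq nat -> bool -> formula -> Prop :=
| part_top : part A [::] true A
| part_orl p B C : part A p true (Or B C) -> part A (rcons p 0) true B
| part_orr p B C : part A p true (Or B C) -> part A (rcons p 1) true C
| part_negp p B : part A p true (Neg B) -> part A (rcons p 0) false B
| part_negn p B : part A p false (Neg B) -> part A (rcons p 0) true B.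

Definition pos_part (A B : formula) : Prop := exists p, part A p true B.
Definition neg_part (A B : formula) : Prop := exists p, part A p false B.

Definition is_prefix (p q : seq nat) : Prop := exists r, q = p ++ r.
Definition overlap (p q : seq nat) : Prop := is_prefix p q \/ is_prefix q p.

(* A is of the form F[B+,B-] *)
Definition has_pos_neg_pair (A : formula) : Prop :=
  exists B p q, part A p true B /\ part A q false B /\ ~ overlap p q.

Definition hintikka (H : formula) : Prop :=
  ~ has_pos_neg_pair H /\
  (forall B C, neg_part H (Or B C) -> neg_part H B \/ neg_part H C) /\
  (forall a b, neg_part H (Eps a b) -> neg_part H (Eps a a)) /\
  (forall a b c, neg_part H (Eps a b) -> neg_part H (Eps b c) -> neg_part H (Eps a c)) /\
  (forall a b, neg_part H (Eps a b) -> neg_part H (Eps b b) -> neg_part H (Eps b a)).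

Definition chain_prop (H : formula) (C : {fset name}) : Prop :=
  forall ai aj, ai \in C -> aj \in C ->
    neg_part H (Eps ai aj) /\ neg_part H (Eps aj ai).

Definition chain (H : formula) (C : {fset name}) : Prop :=
  C != fset0 /\ chain_prop H C /\
  (forall D : {fset name}, C `<=` D -> chain_prop H D -> D = C).

Definition tail (H : formula) (C : {fset name}) (b : name) : Prop :=
  b \notin C /\ exists a, a \in C /\ neg_part H (Eps a b).

From mathcomp Require Import all_boot finmap.
Local Open Scope fset_scope.

(* In a Hintikka formula H the relation "eps x y is a negative
   part of H" is transitive (condition 4), and eps a b together with eps b b
   yields eps b a (condition 5).  Suppose the tail b of C1, reached from
   a \in C1, lay in another chain C2.  Then eps b b holds (b \in C2), so b is
   linked both ways to a, hence to every element of the clique C1.  Gluing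
   C1 and C2 through b by transitivity shows that C1 `|` C2 is still a
   clique; by maximality both C1 and C2 equal this union, so C1 = C2. *)

Definition neg_eps (H : formula) (x y : name) : Prop := neg_part H (Eps x y).

Section HintikkaChains.

Variable H : formula.

Hypothesis neg_eps_trans :
  forall x y z, neg_eps H x y -> neg_eps H y z -> neg_eps H x z.

Lemma linked_to_clique (C : {fset name}) (a b : name) :
  chain_prop H C -> a \in C -> neg_eps H a b -> neg_eps H b a ->
  forall x, x \in C -> neg_eps H x b /\ neg_eps H b x.
Proof.
move=> PC aC Hab Hba x xC; have [Hxa Hax] := PC x a xC aC.
by split; [exact: neg_eps_trans Hxa Hab | exact: neg_eps_trans Hba Hax].
Qed.

Lemma clique_union (C1 C2 : {fset name}) (b : name) :
  chain_prop H C1 -> chain_prop H C2 -> b \in C2 ->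
  (forall x, x \in C1 -> neg_eps H x b /\ neg_eps H b x) ->
  chain_prop H (C1 `|` C2).
Proof.
move=> P1 P2 bC2 L1.
have cross x y : x \in C1 -> y \in C2 -> neg_eps H x y /\ neg_eps H y x.
  move=> xC yC; have [Hxb Hbx] := L1 x xC; have [Hby Hyb] := P2 b y bC2 yC.
  by split; [exact: neg_eps_trans Hxb Hby | exact: neg_eps_trans Hyb Hbx].
move=> x y; rewrite !inE => /orP[xC|xC] /orP[yC|yC].
- exact: P1.
- exact: cross.
- by have [? ?] := cross y x yC xC; split.
- exact: P2.
Qed.

End HintikkaChains.

Arguments linked_to_clique {H} neg_eps_trans {C a b}.
Arguments clique_union {H} neg_eps_trans {C1 C2 b}.

Lemma chains_eq_of_union_clique (H : formula) (C1 C2 : {fset name}) :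
  chain H C1 -> chain H C2 -> chain_prop H (C1 `|` C2) -> C1 = C2.
Proof.
move=> [_ [_ M1]] [_ [_ M2]] PU.
by rewrite -(M1 _ (fsubsetUl C1 C2) PU) -[in RHS](M2 _ (fsubsetUr C1 C2) PU).
Qed.

Theorem proposition5p1 (H : formula) (C1 C2 : {fset name}) (b : name) :
  hintikka H -> chain H C1 -> chain H C2 -> C1 <> C2 -> tail H C1 b ->
  b \notin C2.
Proof.
move=> [_ [_ [_ [Htrans Hsym]]]] ch1 ch2 Hne [_ [a [aC1 Hab]]].
apply/negP=> bC2; apply: Hne.
have [_ [P1 _]] := ch1; have [_ [P2 _]] := ch2.
(* b \in C2 gives eps b b, hence eps b a by condition 5. *)
have Hba : neg_eps H b a by apply: Hsym Hab (P2 b b bC2 bC2).1.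
have L1 := linked_to_clique Htrans P1 aC1 Hab Hba.
exact: chains_eq_of_union_clique ch1 ch2 (clique_union Htrans P1 P2 bC2 L1).
Qed.
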